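(* Let $p$ be a prime and $a,b,c\ge0$ integers with $a,b<p$ and $c\le a+b$. (1) If $c\ge b$, then $f(a,b,c)=t^{c-b}f(b,a,a+b-c)$. (2) If $a+b-(p-1)\le c\le p-1\le a+b$, then $$f(a,b,c)=(-1)^{a+c}(t-1)^{a+b-(p-1)}\,f\big(c-(a+b)+(p-1),\ (p-1)-c,\ (p-1)-b\big).$$
   Context: For non-negative integers $a,b,c$, $f(a,b,c)\in\overline{\mathbb{F}}_p[t]$ is $f(a,b,c)=\sum_{i_2+i_3=c}\binom{a}{i_2}\binom{b}{i_3}t^{i_2}$ (binomial coefficients reduced mod $p$, $\binom{n}{i}=0$ for $i<0$ or $i>n$). *)

From HB Require Import structures.
From mathcomp Require Import all_boot all_order all_algebra.
Set Implicit Arguments. Unset Strict Implicit. Unset Printing Implicit Defensive.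
Import GRing.Theory.
Local Open Scope ring_scope.

(* f(a,b,c) = sum_{i2+i3=c} C(a,i2) C(b,i3) t^{i2}, as a polynomial over a
   field F (of characteristic p in the statement); the nat binomial is cast
   into F, i.e. reduced mod p.  'C(n,k) = 0 for k > n. *)
Definition fpoly (F : fieldType) (a b c : nat) : {poly F} :=
  \sum_(i < c.+1) ('C(a, i) * 'C(b, c - i))%:R *: 'X^i.

From HB Require Import structures.
From mathcomp Require Import all_boot all_order all_algebra.
From mathcomp Require Import ring zify.
Set Implicit Arguments.
Unset Strict Implicit.
Unset Printing Implicit Defensive.

Import GRing.Theory.
Local Open Scope ring_scope.

(* Substituting t = X + 1 and using Vandermonde's identity turns f(a,b,c) into
   sum_k C(a,k) C(a+b-k,c-k) X^k, so both sides of (2) can be compared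
   coefficientwise after this shift.  In characteristic p the coefficients
   match because C(p-1-j, i) = (-1)^i C(j+i, i) for j + i < p, and the
   coefficients of X^k with k < a+b-(p-1) vanish because C(p+r, i) = 0 for
   r < i < p.  Part (1) is the symmetry C(a,i) C(b,c-i) = C(b,i-(c-b)) C(a,a-i)
   of the unshifted coefficients. *)

Lemma mul_bin_bin (n m k : nat) : (k <= m)%N ->
  ('C(n, m) * 'C(m, k) = 'C(n, k) * 'C(n - k, m - k))%N.
Proof.
move=> le_km; have [le_mn | lt_nm] := leqP m n; last first.
  rewrite bin_small // mul0n; have [le_kn | lt_nk] := leqP k n.
    by rewrite (@bin_small (n - k)) ?muln0 //; lia.
  by rewrite bin_small.
have le_kn : (k <= n)%N by lia.
apply/eqP; rewrite -(eqn_pmul2r (_ : 0 < k`! * (m - k)`! * (n - m)`!)%N);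
  last by rewrite !muln_gt0 !fact_gt0.
have fact_nk : ('C(n - k, m - k) * ((m - k)`! * (n - m)`!) = (n - k)`!)%N.
  by rewrite -[(n - m)%N](_ : n - k - (m - k) = n - m)%N ?bin_fact //; lia.
apply/eqP; transitivity n`!.
  by rewrite -(bin_fact le_mn) -(bin_fact le_km); ring.
by rewrite -(bin_fact le_kn) -fact_nk; ring.
Qed.

Lemma sum_mul_bin_bin (a b c k : nat) : (k <= c)%N ->
  (\sum_(i < c.+1) 'C(a, i) * 'C(b, c - i) * 'C(i, k) =
     'C(a, k) * 'C(a + b - k, c - k))%N.
Proof.
move=> le_kc.
rewrite -(big_mkord xpredT (fun i => 'C(a, i) * 'C(b, c - i) * 'C(i, k))%N).
rewrite (@big_cat_nat _ _ _ k) ?leqW //=.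
rewrite big_nat_cond big1 ?add0n; last first.
  by move=> i /andP[/andP[_ lt_ik] _]; rewrite (@bin_small i k) ?muln0.
rewrite -{1}[k]add0n big_addn subSn //.
have [le_ka | lt_ak] := leqP k a; last first.
  by rewrite bin_small // mul0n big1 // => i _; rewrite bin_small ?mul0n //; lia.
rewrite (eq_big_nat _ _
  (F2 := fun i => 'C(a, k) * ('C(a - k, i) * 'C(b, c - k - i)))%N).
  by rewrite -big_distrr /= big_mkord binomial.Vandermonde addnBAC.
move=> i _; rewrite mulnAC mul_bin_bin ?leq_addl // addnK -subnDA addnC; ring.
Qed.

Lemma coef_XaddC1_exp (R : nzRingType) (n i : nat) :
  (('X + 1) ^+ n : {poly R})`_i = 'C(n, i)%:R.
Proof.
rewrite exprD1n coef_sum (eq_bigr (fun j : 'I_n.+1 =>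
  if j == i :> nat then 'C(n, i)%:R else 0)) => [|j _]; last first.
  by rewrite coefMn coefXn eq_sym; case: eqP => [->|]; rewrite ?mul0rn.
rewrite -big_mkcond (big_ord1_eq _ (fun=> 'C(n, i)%:R)).
by case: ltnP => // /bin_small ->.
Qed.

Section PrimeCharRing.

Variables (R : nzRingType) (p : nat).
Hypothesis pcharRp : p \in [pchar R].

Lemma natr_fact_neq0 (n : nat) : (n < p)%N -> n`!%:R != 0 :> R.
Proof.
rewrite -(dvdn_pcharf pcharRp); elim: n => [|n IHn] lt_np.
  by rewrite dvdn1 neq_ltn prime_gt1 ?orbT ?(pcharf_prime pcharRp).
rewrite factS Euclid_dvdM ?(pcharf_prime pcharRp) // negb_or IHn 1?ltnW //.
by rewrite gtnNdvd.
Qed.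

Lemma bin_addp (r i : nat) : (r < i < p)%N -> 'C(p + r, i)%:R = 0 :> R.
Proof.
case/andP=> lt_ri lt_ip; apply/eqP; rewrite -(dvdn_pcharf pcharRp).
rewrite -binomial.Vandermonde; apply: dvdn_sum => -[[|j] lt_ji] _ /=.
  by rewrite subn0 (@bin_small r i) ?muln0.
by rewrite dvdn_mulr // prime_dvd_bin ?(pcharf_prime pcharRp) //=; lia.
Qed.

End PrimeCharRing.

Section PrimeCharIdomain.

Variables (R : idomainType) (p : nat).
Hypothesis pcharRp : p \in [pchar R].

Lemma ffact_predp_sub (j i : nat) : (j + i < p)%N ->
  ((p.-1 - j) ^_ i)%:R = (-1) ^+ i * ((j + i) ^_ i)%:R :> R.
Proof.
elim: i => [|i IHi] lt_jip; first by rewrite !ffactn0 mul1r.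
have p_sub_jiS : (p.-1 - j - i)%:R = - (j + i).+1%:R :> R.
  apply/eqP; rewrite -subr_eq0 opprK -natrD (_ : _ + _ = p)%N ?pcharf0 //; lia.
rewrite addnS in lt_jip *; rewrite ffactnSr natrM IHi 1?ltnW // ffactSS natrM.
by rewrite p_sub_jiS exprS; ring.
Qed.

(* The mod-p shadow of C(-1 - j, i) = (-1)^i C(j + i, i). *)
Lemma bin_predp_sub (j i : nat) : (j + i < p)%N ->
  'C(p.-1 - j, i)%:R = (-1) ^+ i * 'C(j + i, i)%:R :> R.
Proof.
move=> lt_jip; have /mulIf : i`!%:R != 0 :> R by apply: (natr_fact_neq0 pcharRp); lia.
apply; rewrite -natrM bin_ffact ffact_predp_sub //.
by rewrite -mulrA -natrM bin_ffact.
Qed.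

Lemma bin_mul_bin_reflect (a b c k : nat) :
  (k <= a < p)%N -> (k <= c <= a + b)%N -> (a + b - k < p)%N ->
  ('C(a, k) * 'C(a + b - k, c - k))%:R =
    (-1) ^+ (a + c) * ('C(p.-1 - (a + b - c), c - k) * 'C(p.-1 - k, a - k))%:R :> R.
Proof.
case/andP=> le_ka lt_ap /andP[le_kc le_c_ab] lt_abk_p.
rewrite !natrM !bin_predp_sub; try lia.
rewrite (_ : a + b - c + (c - k) = a + b - k)%N; last by lia.
rewrite subnKC // bin_sub // mulrACA !mulrA -!exprD.
rewrite (_ : a + c + (c - k) + (a - k) = 2 * (a + c - k))%N; last by lia.
by rewrite exprM sqrrN !expr1n mul1r mulrC.
Qed.

End PrimeCharIdomain.

Section Fpoly.

Variable F : fieldType.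

Lemma coef_fpoly (a b c i : nat) :
  (fpoly F a b c)`_i = if (i <= c)%N then ('C(a, i) * 'C(b, c - i))%:R else 0.
Proof.
by rewrite /fpoly -(poly_def _ (fun i => ('C(a, i) * 'C(b, c - i))%:R)) coef_poly.
Qed.

Lemma fpoly_comp_XaddC1 (a b c : nat) :
  fpoly F a b c \Po ('X + 1) =
    \poly_(k < c.+1) ('C(a, k) * 'C(a + b - k, c - k))%:R.
Proof.
apply/polyP => k; rewrite coef_poly /fpoly raddf_sum /= coef_sum.
under eq_bigr => i _ do rewrite comp_polyZ comp_Xn_poly coefZ coef_XaddC1_exp -natrM.
rewrite -natr_sum; case: ltnP => [le_kc | lt_ck]; first by rewrite sum_mul_bin_bin.
by rewrite big1 // => i _; rewrite (@bin_small i k) ?muln0 // (leq_trans _ lt_ck).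
Qed.

Lemma fpoly_swap (a b c : nat) : (b <= c <= a + b)%N ->
  fpoly F a b c = 'X^(c - b) * fpoly F b a (a + b - c).
Proof.
case/andP=> le_bc le_c_ab; apply/polyP => i.
rewrite coefXnM !coef_fpoly.
have [lt_i_cb | le_cb_i] := ltnP i (c - b).
  by rewrite ifT ?(@bin_small b (c - i)) ?muln0 //; lia.
rewrite (_ : i - (c - b) <= a + b - c = (i <= a))%N; last by apply/idP/idP; lia.
have [le_ia | lt_ai] := leqP i a; last by rewrite bin_small // mul0n; case: ifP.
have [le_ic | lt_ci] := leqP i c; last by rewrite (@bin_small b) ?mul0n //; lia.
rewrite mulnC (_ : a + b - c - (i - (c - b)) = a - i)%N ?bin_sub //; last by lia.
by rewrite (_ : i - (c - b) = b - (c - i))%N ?bin_sub //; lia.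
Qed.

Lemma fpoly_reflect (p a b c : nat) : p \in [pchar F] ->
  (a < p)%N -> (b < p)%N -> (a + b - p.-1 <= c <= p.-1)%N -> (p.-1 <= a + b)%N ->
  fpoly F a b c =
    (-1) ^+ (a + c) * ('X - 1) ^+ (a + b - p.-1)
    * fpoly F (c + p.-1 - (a + b)) (p.-1 - c) (p.-1 - b).
Proof.
move=> pcharFp lt_ap lt_bp /andP[le_ec le_cp] le_p_ab.
have comp_inj : injective (comp_poly ('X + 1 : {poly F})).
  by apply: (can_inj (g := comp_poly ('X - 1))) => q; rewrite -polyC1 comp_polyXaddC_K.
apply: comp_inj => /=.
rewrite !rmorphM !rmorphXn rmorphN1 rmorphB rmorph1 /= comp_polyX addrK.
rewrite !fpoly_comp_XaddC1.
apply/polyP => k; rewrite -mulrA -(rmorph_sign polyC) coefCM coefXnM !coef_poly.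
have [lt_ke | le_ek] := ltnP k (a + b - p.-1).
  rewrite mulr0 ifT; last by lia.
  rewrite natrM (_ : a + b - k = p + (a + b - k - p))%N; last by lia.
  by rewrite (bin_addp pcharFp) ?mulr0 //; lia.
rewrite ltnS (_ : k - (a + b - p.-1) < (p.-1 - b).+1 = (k <= a))%N; last first.
  by apply/idP/idP; lia.
have [le_ka | lt_ak] := leqP k a; last by rewrite mulr0 bin_small // mul0n; case: ifP.
have [le_kc | lt_ck] := leqP k c; last by rewrite bin_small ?mul0n ?mulr0 //; lia.
rewrite (bin_mul_bin_reflect pcharFp); try lia.
congr (_ * (_ * _)%:R).
  by rewrite -bin_sub; [congr 'C(_, _) | ]; lia.
by congr 'C(_, _); lia.
Qed.

End Fpoly.

Theorem lemmaA4 (F : fieldType) (p : nat) (hp : prime p) (hchar : p \in [pchar F])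
  (a b c : nat) (ha : (a < p)%N) (hb : (b < p)%N) (hc : (c <= a + b)%N) :
  ((b <= c)%N ->
     fpoly F a b c = 'X^(c - b) * fpoly F b a (a + b - c))
  /\
  ((a + b - p.-1 <= c)%N -> (c <= p.-1)%N -> (p.-1 <= a + b)%N ->
     fpoly F a b c =
       (-1) ^+ (a + c) * ('X - 1) ^+ (a + b - p.-1)
       * fpoly F (c + p.-1 - (a + b)) (p.-1 - c) (p.-1 - b)).
Proof.
split=> [le_bc | le_ec le_cp le_p_ab]; first by rewrite fpoly_swap ?le_bc.
by rewrite (fpoly_reflect hchar) ?le_ec.
Qed.
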